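(* There do not exist positive rational numbers $x_1,x_2,x_3,d_1,d_2,d_3$ satisfying $$x_1^2+x_2^2+x_3^2=1,\quad x_2^2+x_3^2=d_1^2,\quad x_3^2+x_1^2=d_2^2,\quad x_1^2+x_2^2=d_3^2$$ together with a rational number $c$ such that $$e_{[1,1]}=c,\qquad e_{[0,1]}=c,\qquad e_{[1,0]}=-c-1.$$ In other words, no rational perfect cuboid with unit space diagonal corresponds to the one-parameter family $E_{11}=c$, $E_{01}=c$, $E_{10}=-c-1$ of rational solutions of the equation $(2E_{11})^2+(E_{01}^2+1-E_{10}^2)^2=8E_{01}^2$.
   Context: A rational perfect cuboid with unit space diagonal is a tuple of positive rationals $x_1,x_2,x_3$ (edges) and $d_1,d_2,d_3$ (face diagonals) satisfying $x_1^2+x_2^2+x_3^2=1$, $x_2^2+x_3^2=d_1^2$, $x_3^2+x_1^2=d_2^2$, $x_1^2+x_2^2=d_3^2$. (Integer perfect cuboids, i.e. cuboids with integer edges, integer face diagonals and integer space diagonal $L$, correspond to these after dividing by $L$.) The elementary multisymmetric polynomials used are $e_{[1,0]}=x_1+x_2+x_3$, $e_{[0,1]}=d_1+d_2+d_3$, and $e_{[1,1]}=x_1d_2+d_1x_2+x_2d_3+d_2x_3+x_3d_1+d_3x_1$. *)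

From HB Require Import structures.
From mathcomp Require Import all_boot all_order all_algebra.
Set Implicit Arguments. Unset Strict Implicit. Unset Printing Implicit Defensive.
Import Order.TTheory GRing.Theory Num.Theory.
Local Open Scope ring_scope.

Definition unit_perfect_cuboid (x1 x2 x3 d1 d2 d3 : rat) : Prop :=
  (0 < x1 /\ 0 < x2 /\ 0 < x3 /\ 0 < d1 /\ 0 < d2 /\ 0 < d3) /\
  [/\ x1 ^+ 2 + x2 ^+ 2 + x3 ^+ 2 = 1,
      x2 ^+ 2 + x3 ^+ 2 = d1 ^+ 2,
      x3 ^+ 2 + x1 ^+ 2 = d2 ^+ 2 &
      x1 ^+ 2 + x2 ^+ 2 = d3 ^+ 2].

Definition e10 (x1 x2 x3 : rat) : rat := x1 + x2 + x3.
Definition e01 (d1 d2 d3 : rat) : rat := d1 + d2 + d3.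
Definition e11 (x1 x2 x3 d1 d2 d3 : rat) : rat :=
  x1 * d2 + d1 * x2 + x2 * d3 + d2 * x3 + x3 * d1 + d3 * x1.

From HB Require Import structures.
From mathcomp Require Import all_boot all_order all_algebra.
Import Order.TTheory GRing.Theory Num.Theory.
Local Open Scope ring_scope.

(* The family  E11 = c, E01 = c, E10 = -c - 1  is excluded by a
   sign argument alone; the quadratic cuboid relations and the value of E11
   play no role.  For a perfect cuboid all edges x_i and all face diagonals
   d_i are positive, hence both linear multisymmetric sums
   E10 = x1 + x2 + x3  and  E01 = d1 + d2 + d3  are positive.  The condition
   E01 = c then gives c > 0, so  E10 = -c - 1 < 0,  contradicting E10 > 0.
   The file first records that a sum of three positive numbers is positive,
   derives positivity of E10 and E01 for a cuboid, and concludes. *)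

Lemma add3_gt0 (R : numDomainType) (a b c : R) :
  0 < a -> 0 < b -> 0 < c -> 0 < a + b + c.
Proof. by move=> a_gt0 b_gt0 c_gt0; rewrite !addr_gt0. Qed.

Lemma e10_cuboid_gt0 (x1 x2 x3 d1 d2 d3 : rat) :
  unit_perfect_cuboid x1 x2 x3 d1 d2 d3 -> 0 < e10 x1 x2 x3.
Proof. by case=> [[? [? [? _]]] _]; exact: add3_gt0. Qed.

Lemma e01_cuboid_gt0 (x1 x2 x3 d1 d2 d3 : rat) :
  unit_perfect_cuboid x1 x2 x3 d1 d2 d3 -> 0 < e01 d1 d2 d3.
Proof. by case=> [[_ [_ [_ [? [? ?]]]]] _]; exact: add3_gt0. Qed.

Lemma neg_pred_opp_lt0 (R : numDomainType) (c : R) : 0 < c -> - c - 1 < 0.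
Proof. by move=> c_gt0; rewrite subr_lt0 (lt_trans _ ltr01) // oppr_lt0. Qed.

Theorem theorem5p1 :
  ~ exists (x1 x2 x3 d1 d2 d3 c : rat),
      unit_perfect_cuboid x1 x2 x3 d1 d2 d3 /\
      e11 x1 x2 x3 d1 d2 d3 = c /\
      e01 d1 d2 d3 = c /\
      e10 x1 x2 x3 = - c - 1.
Proof.
move=> [x1 [x2 [x3 [d1 [d2 [d3 [c [cuboid [_ [e01_c e10_c]]]]]]]]]].
have c_gt0 : 0 < c by rewrite -e01_c; exact: e01_cuboid_gt0 cuboid.
have e10_gt0 : 0 < e10 x1 x2 x3 by exact: e10_cuboid_gt0 cuboid.
by move: e10_gt0; rewrite e10_c ltNge ltW // neg_pred_opp_lt0.
Qed.
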